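(* Let $\Pi$ be an $n$-dimensional linear space satisfying the exchange axiom and the axiom (P2), let $0<k<n-1$, let $B=\{p_1,\dots,p_{n+1}\}$ be a base of $\Pi$, and let $\mathcal{B}_k$ be the base subset of $\mathcal{G}_k(\Pi)$ associated with $B$. A subset $\mathcal{R}\subset\mathcal{B}_k$ is exact if and only if $S_i(\mathcal{R})=\{p_i\}$ for every $i\in\{1,\dots,n+1\}$.
   Context: A linear space $\Pi=(P,\mathcal{L})$ is a set $P$ of points with a family $\mathcal{L}$ of proper subsets (lines) such that each line has at least two points and any two distinct points $p,q$ lie on exactly one line $pq$. A subspace is a set $S\subset P$ with $pq\subset S$ for all distinct $p,q\in S$; $\overline{X}$ is the smallest subspace containing $X$. A set $X$ is independent if $\overline{X}$ is not spanned by a proper subset of $X$; a base of $\Pi$ is an independent set spanning $P$. A subspace is $m$-dimensional if $m+1$ is the smallest number of points spanning it. Exchange axiom: for every $X\subset P$ and $p_1,p_2\in P\setminus\overline{X}$, $p_2\in\overline{X\cup\{p_1\}}$ implies $p_1\in\overline{X\cup\{p_2\}}$. Axiom (P2): every line has at least three points. $\mathcal{G}_k(\Pi)$ is the set of $k$-dimensional subspaces; the base subset of $\mathcal{G}_k(\Pi)$ associated with a base $B$ is the set of all $k$-dimensional subspaces spanned by points of $B$. A subset $\mathcal{R}\subset\mathcal{B}_k$ is exact if $\mathcal{B}_k$ is the unique base subset of $\mathcal{G}_k(\Pi)$ containing $\mathcal{R}$, and inexact otherwise. $S_i(\mathcal{R})$ denotes the intersection of all elements of $\mathcal{R}$ containing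 $p_i$ (the intersection of the empty family being $P$). *)

From Stdlib Require Import List Arith.

Section LinearSpaces.
Variable P : Type.
Variable L : (P -> Prop) -> Prop.

Definition same_set (A B : P -> Prop) : Prop := forall x, A x <-> B x.
Definition subset (A B : P -> Prop) : Prop := forall x, A x -> B x.

Definition linear_space : Prop :=
  (forall l, L l -> exists x, ~ l x) /\
  (forall l, L l -> exists x y, x <> y /\ l x /\ l y) /\
  (forall p q, p <> q -> exists l, L l /\ l p /\ l q) /\
  (forall p q l l', p <> q -> L l -> L l' -> l p -> l q -> l' p -> l' q ->
       same_set l l').

Definition line_through (p q : P) : P -> Prop :=
  fun x => exists l, L l /\ l p /\ l q /\ l x.

Definition subspace (S : P -> Prop) : Prop :=
  forall p q, S p -> S q -> p <> q -> subset (line_through p q) S.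

Definition closure (X : P -> Prop) : P -> Prop :=
  fun x => forall S, subspace S -> subset X S -> S x.

Definition independent (X : P -> Prop) : Prop :=
  forall Y, subset Y X -> (exists x, X x /\ ~ Y x) ->
    ~ same_set (closure Y) (closure X).

Definition is_base (X : P -> Prop) : Prop :=
  independent X /\ same_set (closure X) (fun _ => True).

(* S is an m-dimensional subspace: m+1 is the least number of points spanning S *)
Definition dimension (S : P -> Prop) (m : nat) : Prop :=
  subspace S /\
  (exists l : list P, length l = Datatypes.S m /\ same_set (closure (fun x => In x l)) S) /\
  (forall l : list P, same_set (closure (fun x => In x l)) S -> Datatypes.S m <= length l).

Definition exchange_axiom : Prop :=
  forall (X : P -> Prop) (p1 p2 : P),
    ~ closure X p1 -> ~ closure X p2 ->
    closure (fun x => X x \/ x = p1) p2 ->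
    closure (fun x => X x \/ x = p2) p1.

Definition axiom_P2 : Prop :=
  forall l, L l -> exists a b c, l a /\ l b /\ l c /\ a <> b /\ a <> c /\ b <> c.

Definition base_subset (k : nat) (B : P -> Prop) : (P -> Prop) -> Prop :=
  fun S => dimension S k /\ exists Y, subset Y B /\ same_set (closure Y) S.

(* R (a subset of the base subset associated with B) is exact:
   it is contained in no other base subset of G_k *)
Definition exact (k : nat) (B : P -> Prop) (R : (P -> Prop) -> Prop) : Prop :=
  forall B', is_base B' ->
    (forall S, R S -> base_subset k B' S) ->
    forall S, base_subset k B' S <-> base_subset k B S.

Definition S_of (R : (P -> Prop) -> Prop) (p : P) : P -> Prop :=
  fun x => forall S, R S -> S p -> S x.

End LinearSpaces.

Arguments same_set {P}. Arguments subset {P}. Arguments linear_space {P}. Arguments line_through {P}. Arguments subspace {P}. Arguments closure {P}. Arguments independent {P}. Arguments is_base {P}. Arguments dimension {P}. Arguments exchange_axiom {P}. Arguments axiom_P2 {P}. Arguments base_subset {P}. Arguments exact {P}. Arguments S_of {P}.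

From Stdlib Require Import List Arith Lia Classical Permutation.

(* By the exchange axiom, the spans of two subsets of an independent set meet
   in the span of their intersection.  Applied to the elements of R through
   p_i, this shows that S_i(R) = {p_i} for all i exactly when R separates
   every p_i from every other p_j.

   If some p_j lies in every element of R through p_i, replace p_i by a third
   point q of the line p_i p_j: the new base still has all elements of R in
   its base subset, but not the span of p_i and k points of B other than p_j,
   so R is inexact.  Conversely, if S_i(R) = {p_i} and R lies in the base
   subset of a base B', then p_i is spanned by points of B' lying in S_i(R),
   so p_i is in B'; hence B is contained in B', and the two bases coincide. *)

Lemma exists_list_restriction {A : Type} (Y : A -> Prop) (F : list A) :
  exists F', (forall z, In z F' <-> In z F /\ Y z) /\ length F' <= length F /\
    ((exists f, In f F /\ ~ Y f) -> length F' < length F).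
Proof.
  induction F as [| a F [F' [HF' [Hle Hlt]]]].
  - exists nil. simpl. split; [tauto | split; [lia | intros [f [[] _]]]].
  - destruct (classic (Y a)) as [Ya | nYa].
    + exists (a :: F'). simpl. split; [| split; [lia |]].
      * intros z. rewrite HF'. split; [intros [<- | Hz] | intros [[<- | Hz] Yz]]; tauto.
      * intros [f [[<- | Hf] nYf]]; [contradiction |].
        enough (length F' < length F) by lia. apply Hlt. exists f. auto.
    + exists F'. simpl. split; [| split; [lia | intros _; lia]].
      intros z. rewrite HF'. split; [tauto |]. intros [[<- | Hz] Yz]; tauto.
Qed.

Lemma split_indices (n i j k : nat) :
  i <= n -> j <= n -> i <> j -> k <= n - 1 ->
  exists M C : list nat, length M = k /\ Permutation (i :: M ++ j :: C) (seq 0 (S n)).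
Proof.
  intros Hi Hj Hij Hk.
  set (others := filter (fun m => andb (negb (m =? i)) (negb (m =? j))) (seq 0 (S n))).
  assert (Hothers : forall m, In m others <-> m <= n /\ m <> i /\ m <> j).
  { intros m. unfold others.
    rewrite filter_In, in_seq, Bool.andb_true_iff, !Bool.negb_true_iff, !Nat.eqb_neq. lia. }
  assert (Hperm : Permutation (i :: j :: others) (seq 0 (S n))).
  { apply NoDup_Permutation; [| apply seq_NoDup |].
    - constructor; [| constructor; [| apply NoDup_filter, seq_NoDup]].
      + intros [E | H]; [| apply Hothers in H]; lia.
      + intros H. apply Hothers in H. lia.
    - intros m. simpl. rewrite in_seq, Hothers. lia. }
  exists (firstn k others), (skipn k others). split.
  - apply firstn_length_le.
    apply Permutation_length in Hperm. rewrite length_seq in Hperm. simpl in Hperm. lia.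
  - eapply perm_trans; [| exact Hperm]. apply perm_skip.
    rewrite <- (firstn_skipn k others) at 3. symmetry. apply Permutation_middle.
Qed.

Section LinearSpace.
Context {P : Type} (L : (P -> Prop) -> Prop).

Definition add_point (X : P -> Prop) (q : P) : P -> Prop := fun z => X z \/ z = q.
Definition remove_point (X : P -> Prop) (b : P) : P -> Prop := fun z => X z /\ z <> b.

Lemma closure_ext (X : P -> Prop) : subset X (closure L X).
Proof. intros x Xx S _ HXS. exact (HXS x Xx). Qed.

Lemma closure_subspace (X : P -> Prop) : subspace L (closure L X).
Proof.
  intros a b Ha Hb Hab z Hz S HS HXS.
  exact (HS a b (Ha S HS HXS) (Hb S HS HXS) Hab z Hz).
Qed.

Lemma closure_min (X S : P -> Prop) :
  subspace L S -> subset X S -> subset (closure L X) S.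
Proof. intros HS HXS x Hx. exact (Hx S HS HXS). Qed.

Lemma closure_sub (X Y : P -> Prop) :
  subset X (closure L Y) -> subset (closure L X) (closure L Y).
Proof. apply closure_min, closure_subspace. Qed.

Lemma closure_mono (X Y : P -> Prop) :
  subset X Y -> subset (closure L X) (closure L Y).
Proof. intros HXY. apply closure_sub. intros x Xx. apply closure_ext, HXY, Xx. Qed.

Lemma closure_nil (x : P) : ~ closure L (fun z => In z nil) x.
Proof. intros Hx. apply (Hx (fun _ => False)); [intros a b [] | intros z []]. Qed.

Lemma subspace_line (S l : P -> Prop) (a b c : P) :
  subspace L S -> L l -> l a -> l b -> l c -> a <> b -> S a -> S b -> S c.
Proof. intros HS Hl la lb lc Hab Sa Sb. apply (HS a b Sa Sb Hab c). exists l. auto. Qed.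

Lemma subspace_singleton (a : P) : subspace L (fun z => z = a).
Proof. intros x y -> -> Hxy. contradiction. Qed.

Lemma closure_finitary (X : P -> Prop) (x : P) :
  closure L X x -> exists F, (forall f, In f F -> X f) /\ closure L (fun z => In z F) x.
Proof.
  intros Hx. apply Hx.
  - intros a b [Fa [HFa Ha]] [Fb [HFb Hb]] Hab z Hz.
    exists (Fa ++ Fb). split.
    + intros f Hf. apply in_app_or in Hf as [Hf | Hf]; auto.
    + apply (closure_subspace _ a b); auto.
      * revert Ha. apply closure_mono. intros y Hy. apply in_or_app. auto.
      * revert Hb. apply closure_mono. intros y Hy. apply in_or_app. auto.
  - intros z Xz. exists (z :: nil). split.
    + intros f [<- | []]. exact Xz.
    + apply closure_ext. left. reflexivity.
Qed.

Lemma exists_third_point (a b : P) :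
  linear_space L -> axiom_P2 L -> a <> b ->
  exists l q, L l /\ l a /\ l b /\ l q /\ q <> a /\ q <> b.
Proof.
  intros [_ [_ [Hline _]]] HP2 Hab.
  destruct (Hline a b Hab) as [l [Hl [la lb]]].
  destruct (HP2 l Hl) as [x [y [z [lx [ly [lz [Hxy [Hxz Hyz]]]]]]]].
  exists l.
  destruct (classic (x <> a /\ x <> b)) as [Hx | Hx]; [exists x; tauto |].
  destruct (classic (y <> a /\ y <> b)) as [Hy | Hy]; [exists y; tauto |].
  exists z.
  apply not_and_or in Hx as [Hx | Hx]; apply NNPP in Hx;
  apply not_and_or in Hy as [Hy | Hy]; apply NNPP in Hy;
  repeat split; auto; intros ->; congruence.
Qed.

Lemma independent_notin_closure (B Y : P -> Prop) (b : P) :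
  independent L B -> B b -> subset Y (remove_point B b) -> ~ closure L Y b.
Proof.
  intros HB Bb HY Hb.
  apply (HB (remove_point B b)).
  - intros z [Bz _]. exact Bz.
  - exists b. split; [exact Bb | intros [_ Hbb]; auto].
  - intros z. split.
    + apply closure_mono. intros y [By _]. exact By.
    + apply closure_sub. intros y By.
      destruct (classic (y = b)) as [-> | Hyb].
      * exact (closure_mono _ _ HY b Hb).
      * apply closure_ext. split; assumption.
Qed.

Lemma independent_intro (X : P -> Prop) :
  (forall b, X b -> ~ closure L (remove_point X b) b) -> independent L X.
Proof.
  intros HX Y HYX [b [Xb nYb]] HYcl.
  apply (HX b Xb).
  apply (closure_mono Y); [intros y Yy; split; [auto | intros ->; auto] |].
  apply HYcl, closure_ext, Xb.
Qed.

Lemma independent_subset (B X : P -> Prop) :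
  independent L B -> subset X B -> independent L X.
Proof.
  intros HB HXB. apply independent_intro. intros b Xb.
  apply (independent_notin_closure B); auto.
  intros y [Xy Hyb]. split; auto.
Qed.

Lemma independent_superset_base (B B' : P -> Prop) :
  is_base L B -> independent L B' -> subset B B' -> subset B' B.
Proof.
  intros [_ Hspan] HB' HBB' z B'z. apply NNPP. intros nBz.
  apply (HB' B HBB'); [exists z; auto |].
  intros y. split; intros _; [apply (closure_mono B B' HBB') |]; apply Hspan; trivial.
Qed.

Lemma base_subset_mono (k : nat) (B B' S : P -> Prop) :
  subset B B' -> base_subset L k B S -> base_subset L k B' S.
Proof.
  intros HBB' [Hd [Y [HYB HYS]]]. split; [exact Hd |].
  exists Y. split; [intros y Yy; apply HBB', HYB, Yy | exact HYS].
Qed.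

Lemma dimension_closure_list (n k : nat) (X C : list P) :
  dimension L (fun _ => True) n ->
  same_set (closure L (fun z => In z (X ++ C))) (fun _ => True) ->
  length X = S k -> length X + length C <= S n ->
  dimension L (closure L (fun z => In z X)) k.
Proof.
  intros [_ [_ Hmin]] Hspan HX HXC.
  split; [apply closure_subspace | split].
  - exists X. split; [exact HX | intros z; reflexivity].
  - intros Y HY. destruct (le_lt_dec (S k) (length Y)) as [Hle | Hlt]; [exact Hle | exfalso].
    assert (HYC : same_set (closure L (fun z => In z (Y ++ C))) (fun _ => True)).
    { intros z. split; [trivial | intros _].
      apply (closure_sub (fun z => In z (X ++ C))); [| apply Hspan; trivial].
      intros y Hy. apply in_app_or in Hy as [Xy | Cy].
      - apply (closure_mono (fun z => In z Y)); [intros w Yw; apply in_or_app; auto |].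
        apply HY, closure_ext, Xy.
      - apply closure_ext, in_or_app. auto. }
    specialize (Hmin _ HYC). rewrite length_app in Hmin. lia.
Qed.

Section Exchange.
Hypothesis Hexch : exchange_axiom L.

Lemma closure_add_point_redundant (B W Y : P -> Prop) (f x : P) :
  independent L B -> subset W B -> B f -> subset Y B -> ~ Y f ->
  closure L Y x -> closure L (add_point W f) x -> closure L W x.
Proof.
  intros HB HWB Bf HYB nYf HYx Hx. apply NNPP. intros nWx.
  assert (nWf : ~ closure L W f).
  { intros HWf. apply nWx. revert Hx. apply closure_sub.
    intros z [Wz | ->]; [apply closure_ext |]; assumption. }
  apply (independent_notin_closure B (remove_point B f) f HB Bf (fun z Hz => Hz)).
  generalize (Hexch W f x nWf nWx Hx). apply closure_sub.
  intros z [Wz | ->].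
  - apply closure_ext. split; [auto | intros ->; apply nWf, closure_ext, Wz].
  - revert HYx. apply closure_mono. intros y Yy. split; [auto | intros ->; contradiction].
Qed.

(* The extra set [Z] absorbs the points of [F] already known to lie in [Y],
   which makes the statement amenable to induction on [F]. *)
Lemma closure_list_union_inter (B Y : P -> Prop) (x : P) :
  independent L B -> subset Y B -> closure L Y x ->
  forall F : list P, (forall f, In f F -> B f) ->
  forall Z : P -> Prop, subset Z Y ->
  closure L (fun z => In z F \/ Z z) x ->
  closure L (fun z => (In z F /\ Y z) \/ Z z) x.
Proof.
  intros HB HYB HYx F. induction F as [| f F IH]; intros HF Z HZY Hx.
  - revert Hx. apply closure_mono. intros z [[] | Zz]. right. exact Zz.
  - assert (HF' : forall g, In g F -> B g) by (intros g Hg; apply HF; right; exact Hg).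
    destruct (classic (Y f)) as [Yf | nYf].
    + assert (H : closure L (fun z => (In z F /\ Y z) \/ add_point Z f z) x).
      { apply IH; [exact HF' | intros z [Zz | ->]; auto |].
        revert Hx. apply closure_mono.
        intros z [[<- | Fz] | Zz]; [right; right | left | right; left]; auto. }
      revert H. apply closure_mono.
      intros z [[Fz Yz] | [Zz | ->]]; [left; split; [right |] | right | left; split; [left |]]; auto.
    + assert (H : closure L (fun z => In z F \/ Z z) x).
      { apply (closure_add_point_redundant B _ Y f); auto.
        - intros z [Fz | Zz]; [apply HF'; exact Fz | apply HYB, HZY, Zz].
        - apply HF. left. reflexivity.
        - revert Hx. apply closure_mono.
          intros z [[<- | Fz] | Zz]; [right | left; left | left; right]; auto. }
      apply IH in H; [| exact HF' | exact HZY].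
      revert H. apply closure_mono.
      intros z [[Fz Yz] | Zz]; [left; split; [right |] | right]; auto.
Qed.

Lemma closure_list_inter (B Y : P -> Prop) (F : list P) (x : P) :
  independent L B -> subset Y B -> (forall f, In f F -> B f) ->
  closure L Y x -> closure L (fun z => In z F) x ->
  closure L (fun z => In z F /\ Y z) x.
Proof.
  intros HB HYB HF HYx Hx.
  assert (H : closure L (fun z => (In z F /\ Y z) \/ False) x).
  { apply (closure_list_union_inter B Y x HB HYB HYx F HF (fun _ => False)); [intros z [] |].
    revert Hx. apply closure_mono. intros z Fz. left. exact Fz. }
  revert H. apply closure_mono. intros z [Hz | []]. exact Hz.
Qed.

Lemma common_finite_span (B : P -> Prop) (T : (P -> Prop) -> Prop) (x : P) :
  independent L B ->
  (forall S, T S -> S x) ->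
  (forall S, T S -> exists Y, subset Y B /\ same_set (closure L Y) S) ->
  forall F : list P, (forall f, In f F -> B f) -> closure L (fun z => In z F) x ->
  exists F' : list P, (forall f, In f F' -> B f) /\ closure L (fun z => In z F') x /\
    forall S, T S -> subset (closure L (fun z => In z F')) S.
Proof.
  intros HB HTx HTY F.
  induction F as [F IH] using (induction_ltof1 _ (@length P)). unfold ltof in IH.
  intros HF Hx.
  destruct (classic (forall S, T S -> subset (closure L (fun z => In z F)) S))
    as [Hall | Hnot]; [exists F; auto |].
  apply not_all_ex_not in Hnot as [S HS]. apply imply_to_and in HS as [TS HS].
  destruct (HTY S TS) as [Y [HYB HYS]].
  destruct (exists_list_restriction Y F) as [F' [HF' [_ Hlt]]].
  apply (IH F').
  - apply Hlt. apply NNPP. intros Hno. apply HS.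
    intros y Hy. apply (proj1 (HYS y)). revert Hy. apply closure_mono.
    intros z Fz. apply NNPP. intros nYz. apply Hno. exists z. auto.
  - intros f Hf. apply HF, HF', Hf.
  - apply (closure_mono (fun z => In z F /\ Y z)); [intros z Hz; apply HF', Hz |].
    apply (closure_list_inter B); auto. apply (proj2 (HYS x)), HTx, TS.
Qed.

Lemma independent_add_point (X : P -> Prop) (q : P) :
  independent L X -> ~ closure L X q -> independent L (add_point X q).
Proof.
  intros HX nXq. apply independent_intro. intros y Hy Hcl.
  destruct (classic (y = q)) as [-> | Hyq].
  - apply nXq. revert Hcl. apply closure_mono.
    intros z [[Xz | ->] Hzq]; [exact Xz | contradiction].
  - destruct Hy as [Xy | ->]; [| contradiction].
    assert (nWy : ~ closure L (remove_point X y) y)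
      by (apply (independent_notin_closure X); auto; intros z Hz; exact Hz).
    assert (nWq : ~ closure L (remove_point X y) q).
    { intros H. apply nXq. revert H. apply closure_mono. intros z [Xz _]. exact Xz. }
    apply nXq. generalize (Hexch (remove_point X y) q y nWq nWy).
    intros Hex. apply (closure_mono (add_point (remove_point X y) y)).
    + intros z [[Xz _] | ->]; assumption.
    + apply Hex. revert Hcl. apply closure_mono.
      intros z [[Xz | ->] Hzy]; [left; split | right]; auto.
Qed.

Section OnePointExchange.
Variables (B l : P -> Prop) (a b q : P).
Hypotheses (HB : independent L B) (Ba : B a) (Bb : B b)
  (Hl : L l) (la : l a) (lb : l b) (lq : l q)
  (Hab : a <> b) (Hqa : q <> a) (Hqb : q <> b).

Lemma base_exchange :
  same_set (closure L B) (fun _ => True) -> is_base L (add_point (remove_point B b) q).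
Proof.
  intros Hspan.
  assert (nq : ~ closure L (remove_point B b) q).
  { intros Hq. apply (independent_notin_closure B (remove_point B b) b HB Bb (fun z Hz => Hz)).
    apply (subspace_line _ l a q b (closure_subspace _)); auto.
    apply closure_ext. split; auto. }
  split.
  - apply independent_add_point; [| exact nq].
    apply (independent_subset B); [exact HB |]. intros z [Bz _]. exact Bz.
  - intros z. split; [trivial | intros _].
    apply (closure_sub B); [| apply Hspan; trivial].
    intros y By. destruct (classic (y = b)) as [-> | Hyb].
    + apply (subspace_line _ l a q b (closure_subspace _)); auto;
        apply closure_ext; [left; split | right]; auto.
    + apply closure_ext. left. split; auto.
Qed.

Lemma base_subset_exchange (k : nat) (S : P -> Prop) :
  base_subset L k B S -> (S b -> S a) ->
  base_subset L k (add_point (remove_point B b) q) S.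
Proof.
  intros [Hd [X [HXB HXS]]] Hba. split; [exact Hd |].
  assert (HS : subspace L S) by apply Hd.
  destruct (classic (S b)) as [Sb | nSb].
  - assert (Xa : X a).
    { apply NNPP. intros nXa. apply (independent_notin_closure B X a HB Ba).
      - intros y Xy. split; [auto | intros ->; contradiction].
      - apply (proj2 (HXS a)), Hba, Sb. }
    exists (add_point (remove_point X b) q). split.
    + intros y [[Xy Hyb] | ->]; [left; split; auto | right; reflexivity].
    + intros z. split.
      * apply closure_min; [exact HS |]. intros y [[Xy _] | ->].
        -- apply (proj1 (HXS y)), closure_ext, Xy.
        -- apply (subspace_line S l a b q); auto.
      * intros Sz. apply (proj2 (HXS z)) in Sz. revert Sz. apply closure_sub.
        intros y Xy. destruct (classic (y = b)) as [-> | Hyb].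
        -- apply (subspace_line _ l a q b (closure_subspace _)); auto;
             apply closure_ext; [left; split | right]; auto.
        -- apply closure_ext. left. split; auto.
  - exists X. split; [| exact HXS].
    intros y Xy. left. split; [auto | intros ->; apply nSb, (proj1 (HXS b)), closure_ext, Xy].
Qed.

Lemma not_base_subset_exchange (k : nat) (S : P -> Prop) :
  S b -> ~ S a -> ~ base_subset L k (add_point (remove_point B b) q) S.
Proof.
  intros Sb nSa [Hd [Y [HYB HYS]]].
  assert (HS : subspace L S) by apply Hd.
  destruct (classic (Y q)) as [Yq | nYq].
  - apply nSa, (subspace_line S l b q a); auto.
    apply (proj1 (HYS q)), closure_ext, Yq.
  - apply (independent_notin_closure B Y b HB Bb); [| apply (proj2 (HYS b)), Sb].
    intros y Yy. destruct (HYB y Yy) as [Hy | ->]; [exact Hy | contradiction].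
Qed.

End OnePointExchange.

Lemma S_of_separated (k : nat) (B : P -> Prop) (R : (P -> Prop) -> Prop) (b x : P) :
  is_base L B -> (forall S, R S -> base_subset L k B S) -> B b ->
  (forall c, B c -> c <> b -> exists S, R S /\ S b /\ ~ S c) ->
  S_of R b x -> x = b.
Proof.
  intros [HB Hspan] HR Bb Hsep Hx.
  destruct (closure_finitary B x) as [F0 [HF0 Hx0]]; [apply Hspan; trivial |].
  destruct (common_finite_span B (fun S => R S /\ S b) x HB
              (fun S HS => Hx S (proj1 HS) (proj2 HS))
              (fun S HS => proj2 (HR S (proj1 HS))) F0 HF0 Hx0)
    as [F [HF [HFx HFT]]].
  apply (closure_min (fun z => In z F) (fun z => z = b)); [apply subspace_singleton | | exact HFx].
  intros f Hf. apply NNPP. intros Hfb.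
  destruct (Hsep f (HF f Hf) Hfb) as [S [RS [Sb nSf]]].
  apply nSf, (HFT S (conj RS Sb)), closure_ext, Hf.
Qed.

Lemma exact_of_S_of_singleton (k : nat) (B : P -> Prop) (R : (P -> Prop) -> Prop) :
  is_base L B -> (forall b, B b -> forall x, S_of R b x -> x = b) -> exact L k B R.
Proof.
  intros HB HS B' [HB' HB'span] HRB'.
  assert (HBB' : subset B B').
  { intros b Bb.
    destruct (closure_finitary B' b) as [F0 [HF0 Hb0]]; [apply HB'span; trivial |].
    destruct (common_finite_span B' (fun S => R S /\ S b) b HB' (fun S HS => proj2 HS)
                (fun S HS => proj2 (HRB' S (proj1 HS))) F0 HF0 Hb0)
      as [[| f F] [HF [HFb HFT]]]; [destruct (closure_nil b HFb) |].
    assert (Hf : f = b).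
    { apply (HS b Bb). intros S RS Sb.
      apply (HFT S (conj RS Sb)), closure_ext. left. reflexivity. }
    subst f. apply HF. left. reflexivity. }
  assert (HB'B := independent_superset_base B B' HB HB' HBB').
  intros S. split; apply base_subset_mono; assumption.
Qed.

Definition indexed_points (n : nat) (p : nat -> P) : P -> Prop :=
  fun x => exists i, i <= n /\ x = p i.

Section IndexedBase.
Variables (n : nat) (p : nat -> P).
Hypotheses (Hinj : forall i j, i <= n -> j <= n -> p i = p j -> i = j)
  (Hbase : is_base L (indexed_points n p))
  (Hdim : dimension L (fun _ => True) n).

Lemma separating_base_subset (k i j : nat) :
  k <= n - 1 -> i <= n -> j <= n -> i <> j ->
  exists S, base_subset L k (indexed_points n p) S /\ S (p i) /\ ~ S (p j).
Proof.
  intros Hk Hi Hj Hij.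
  destruct (split_indices n i j k Hi Hj Hij Hk) as [M [C [HM Hperm]]].
  assert (Hidx : forall m, In m (i :: M ++ j :: C) <-> m <= n).
  { intros m. split; intros Hm.
    - apply (Permutation_in _ Hperm), in_seq in Hm. lia.
    - apply (Permutation_in _ (Permutation_sym Hperm)), in_seq. lia. }
  assert (nj : ~ In j (i :: M)).
  { intros Hj'. apply (NoDup_remove_2 (i :: M) C j).
    - apply (Permutation_NoDup (Permutation_sym Hperm)), seq_NoDup.
    - apply in_or_app. left. exact Hj'. }
  exists (closure L (fun z => In z (map p (i :: M)))). split; [split | split].
  - apply (dimension_closure_list n k _ (map p (j :: C)) Hdim).
    + intros z. split; [trivial | intros _].
      apply (closure_sub (indexed_points n p)); [| apply Hbase; trivial].
      intros y [m [Hm ->]]. apply closure_ext.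
      rewrite <- map_app. apply in_map, Hidx, Hm.
    + simpl. rewrite length_map, HM. reflexivity.
    + apply Permutation_length in Hperm.
      rewrite length_seq in Hperm. simpl in *. rewrite !length_map, length_app in *.
      simpl in Hperm. lia.
  - exists (fun z => In z (map p (i :: M))). split; [| intros z; reflexivity].
    intros y Hy. apply in_map_iff in Hy as [m [<- Hm]].
    exists m. split; [apply Hidx; simpl in *; rewrite in_app_iff; tauto | reflexivity].
  - apply closure_ext. left. reflexivity.
  - apply (independent_notin_closure (indexed_points n p)); [exact (proj1 Hbase) | exists j; auto |].
    intros y Hy. apply in_map_iff in Hy as [m [<- Hm]].
    assert (Hmn : m <= n) by (apply Hidx; simpl in *; rewrite in_app_iff; tauto).
    split; [exists m; auto |].
    intros E. apply Hinj in E; [subst m; contradiction | assumption | assumption].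
Qed.

Lemma exact_separates_points (k i j : nat) (R : (P -> Prop) -> Prop) :
  linear_space L -> axiom_P2 L -> k <= n - 1 ->
  (forall S, R S -> base_subset L k (indexed_points n p) S) ->
  exact L k (indexed_points n p) R ->
  i <= n -> j <= n -> i <> j -> exists S, R S /\ S (p i) /\ ~ S (p j).
Proof.
  intros HL HP2 Hk HR Hexact Hi Hj Hij.
  apply NNPP. intros Hno.
  assert (HRij : forall S, R S -> S (p i) -> S (p j)).
  { intros S RS Si. apply NNPP. intros nSj. apply Hno. exists S. auto. }
  assert (Hpij : p i <> p j) by (intros E; apply Hij, Hinj; assumption).
  destruct (exists_third_point (p i) (p j) HL HP2 Hpij)
    as [l [q [Hl [li [lj [lq [Hqi Hqj]]]]]]].
  assert (Bi : indexed_points n p (p i)) by (exists i; auto).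
  assert (Bj : indexed_points n p (p j)) by (exists j; auto).
  destruct (separating_base_subset k i j Hk Hi Hj Hij) as [S0 [HS0 [S0i nS0j]]].
  apply (not_base_subset_exchange (indexed_points n p) l (p j) (p i) q (proj1 Hbase)
           Bi Hl lj li lq Hqi k S0 S0i nS0j).
  apply (Hexact (add_point (remove_point (indexed_points n p) (p i)) q)); [| | exact HS0].
  - apply (base_exchange _ l (p j) (p i) q (proj1 Hbase) Bj Bi Hl lj li lq); auto.
    exact (proj2 Hbase).
  - intros S RS.
    apply (base_subset_exchange _ l (p j) (p i) q (proj1 Hbase) Bj Hl lj li lq); auto.
    exact (HRij S RS).
Qed.

End IndexedBase.

End Exchange.
End LinearSpace.

(* Points p 0, ..., p n play the role of p_1, ..., p_{n+1}. *)
Theorem lemma2p2 (P : Type) (L : (P -> Prop) -> Prop) (n k : nat)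
  (HL : linear_space L)
  (Hdim : dimension L (fun _ => True) n)
  (Hexch : exchange_axiom L)
  (HP2 : axiom_P2 L)
  (Hk0 : 0 < k) (Hk : k < n - 1)
  (p : nat -> P)
  (Hinj : forall i j, i <= n -> j <= n -> p i = p j -> i = j)
  (Hbase : is_base L (fun x => exists i, i <= n /\ x = p i))
  (R : (P -> Prop) -> Prop)
  (HR : forall S, R S -> base_subset L k (fun x => exists i, i <= n /\ x = p i) S) :
  exact L k (fun x => exists i, i <= n /\ x = p i) R <->
  (forall i, i <= n -> forall x, S_of R (p i) x <-> x = p i).
Proof.
  split.
  - intros Hexact i Hi x. split; [| intros -> S _ Si; exact Si].
    apply (S_of_separated L Hexch k (indexed_points n p) R); [exact Hbase | exact HR | exists i; auto |].
    intros c [j [Hj ->]] Hji.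
    apply (exact_separates_points L Hexch n p Hinj Hbase Hdim k i j R HL HP2);
      [lia | exact HR | exact Hexact | exact Hi | exact Hj |].
    intros ->. contradiction.
  - intros HS. apply (exact_of_S_of_singleton L Hexch k (indexed_points n p) R Hbase).
    intros b [i [Hi ->]] x Hx. exact (proj1 (HS i Hi x) Hx).
Qed.
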